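(* In the setting below, the minimizer $\theta_n^*=(\rho_n^*,\lambda_n^* )$ of the population dual loss $L_n(\cdot\,;\sigma^2,B)$ over $\Theta(\ell)$ satisfies, as $n\to\infty$, $$\|\lambda_{n,-1}^*\|_2=O\big(\lambda_{n,1}^*\ell^3+n^{-1}\big).$$ Consequently, for fixed $\delta,\epsilon\in(0,1)$, if $\hat B\ge \varepsilon_0>0$, there is a constant $C$ depending only on $\delta$, $B$ and $\varepsilon_0$ such that $$\sup_{\theta\,\in\,\Theta_n(\ell,\delta,\epsilon)} \big|L_n(\theta;\hat\sigma^2,\hat B)-L_n(\theta;\hat\sigma^2, B)\big|\le C\, \frac{(\lambda_{n,1}^* )^2}{n}\Big|\frac{1}{\hat B}-\frac{1}{B}\Big|,$$ where here $\theta_n^*=\theta_n^*(\hat\sigma^2,B)$ is used in the definition of $\Theta_n(\ell,\delta,\epsilon)$.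
   Context: Regression discontinuity setting with cutoff normalized to $c=0$: i.i.d. pairs $(X_i,Y_i)$, $W_i=\mathbf{1}\{X_i\ge 0\}$, the running variable has a strictly positive density at $0$; only observations with $|X_i|\le\ell$ are used, and $(X,W)$ denotes a generic draw of a retained running variable and its treatment indicator. For $\lambda=(\lambda_1,\dots,\lambda_6)$ write $\lambda_{-1}=(\lambda_2,\dots,\lambda_6)$. Dual parameter space: $\Theta(\ell)=\{(f,\lambda): f:[-\ell,\ell]\to\mathbb{R},\ f(0)=f'(0)=f''(0)=0,\ f''\text{ is }\lambda_1\text{-Lipschitz},\ \lambda\in[0,\infty)\times\mathbb{R}^5\}$. For $\theta=(\rho,\lambda)$ let $G(\theta;x,w)=\rho(x)+\lambda_2 w+\lambda_3(1-w)+\lambda_4 wx+\lambda_5(1-w)x+\lambda_6x^2$. Population dual loss: $L_n(\theta;\sigma^2,B)=\frac{1}{4\sigma^2}\mathbb{E}[G^2(\theta;X,W)]+\frac{\lambda_1^2}{4nB^2}+\frac{\lambda_2-\lambda_3}{n}$, with minimizer $\theta_n^*(\sigma^2,B)=(\rho_n^*,\lambda_n^* )$ over $\Theta(\ell)$. $\hat\sigma^2>0$, $\hat B>0$ are estimates computed independently of the sample and $B>0$ is a fixed constant. Neighborhood: $\Theta_n(\ell,\delta,\epsilon)=\{(\rho,\lambda)\in\Theta(\ell): |\lambda_1-\lambda^*_{n,1}|\le\delta\lambda^*_{n,1},\ \|\lambda_{-1}-\lambda^*_{n,-1}\|_2\le\epsilon\|\lambda^*_{n,-1}\|_2\}$.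 *)

From HB Require Import structures.
From mathcomp Require Import all_boot all_order all_algebra.
From mathcomp Require Import all_classical all_reals all_analysis.
Set Implicit Arguments. Unset Strict Implicit. Unset Printing Implicit Defensive.
Import Order.TTheory GRing.Theory Num.Theory.
Import numFieldNormedType.Exports.
Local Open Scope classical_set_scope.
Local Open Scope ring_scope.

Record dual_param (R : realType) := DualParam {
  rho : R -> R;
  lam1 : R; lam2 : R; lam3 : R; lam4 : R; lam5 : R; lam6 : R }.

(* Euclidean norm of lambda_{-1} = (lambda_2, ..., lambda_6). *)
Definition norm_lam_rest (R : realType) (t : dual_param R) : R :=
  Num.sqrt (lam2 t ^+ 2 + lam3 t ^+ 2 + lam4 t ^+ 2 + lam5 t ^+ 2 + lam6 t ^+ 2).

Definition treat (R : realType) (x : R) : R := if 0 <= x then 1 else 0.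

Definition Gfun (R : realType) (t : dual_param R) (x w : R) : R :=
  rho t x + lam2 t * w + lam3 t * (1 - w) + lam4 t * w * x
  + lam5 t * (1 - w) * x + lam6 t * x ^+ 2.

(* Membership in Theta(l): rho is (represented by a function on R which,
   restricted to [-l,l], is) twice differentiable with rho(0)=rho'(0)=rho''(0)=0,
   rho'' lambda_1-Lipschitz on [-l,l], and lambda_1 >= 0. *)
Definition in_Theta (R : realType) (l : R) (t : dual_param R) : Prop :=
  0 <= lam1 t /\
  (forall x : R, derivable (rho t) x 1) /\
  (forall x : R, derivable (derive1 (rho t)) x 1) /\
  rho t 0 = 0 /\ (derive1 (rho t)) 0 = 0 /\ (derive1 (derive1 (rho t))) 0 = 0 /\
  (forall x y : R, x \in `[-l, l] -> y \in `[-l, l] ->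
     `|(derive1 (derive1 (rho t))) x - (derive1 (derive1 (rho t))) y| <= lam1 t * `|x - y|).

Definition retained (R : realType) (l : R) : set R := [set x : R | `|x| <= l].

(* E[G^2(theta; X, W)] for a retained draw, i.e. X ~ P conditioned on |X| <= l. *)
Definition EG2 (R : realType) (l : R) (P : probability R R) (t : dual_param R) : R :=
  fine (\int[P]_(x in retained l) ((Gfun t x (treat x)) ^+ 2)%:E)%E
  / fine (P (retained l)).

Definition dual_loss (R : realType) (l : R) (P : probability R R) (n : nat)
  (t : dual_param R) (s2 B : R) : R :=
  EG2 l P t / (4 * s2) + lam1 t ^+ 2 / (4 * n%:R * B ^+ 2)
  + (lam2 t - lam3 t) / n%:R.

Definition is_minimizer (R : realType) (l : R) (P : probability R R) (n : nat)
  (s2 B : R) (t : dual_param R) : Prop :=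
  in_Theta l t /\
  forall t', in_Theta l t' -> dual_loss l P n t s2 B <= dual_loss l P n t' s2 B.

Definition in_nbhd (R : realType) (l delta eps : R) (tstar t : dual_param R) : Prop :=
  in_Theta l t /\
  `|lam1 t - lam1 tstar| <= delta * lam1 tstar /\
  Num.sqrt ((lam2 t - lam2 tstar) ^+ 2 + (lam3 t - lam3 tstar) ^+ 2
            + (lam4 t - lam4 tstar) ^+ 2 + (lam5 t - lam5 tstar) ^+ 2
            + (lam6 t - lam6 tstar) ^+ 2) <= eps * norm_lam_rest tstar.

Definition rv_law (R : realType) (P : probability R R) (p : R -> R) : Prop :=
  measurable_fun setT p /\ (forall x, 0 <= p x) /\
  (forall A : set R, measurable A ->
     (P A = \int[lebesgue_measure]_(x in A) (p x)%:E)%E) /\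
  {for 0, continuous p} /\ 0 < p 0.

From HB Require Import structures.
From mathcomp Require Import all_boot all_order all_algebra.
From mathcomp Require Import all_classical all_reals all_analysis.
From mathcomp Require Import measurable_realfun ring lra.
Import Order.TTheory GRing.Theory Num.Theory.
Import numFieldNormedType.Exports.

Set Implicit Arguments.
Unset Strict Implicit.
Unset Printing Implicit Defensive.

Local Open Scope classical_set_scope.
Local Open Scope ring_scope.

(* Comparing the minimizer with the competitor that keeps (rho, lambda_1) and
   sets lambda_{-1} = 0 bounds E[G^2] by (lambda_1 l^3)^2 + O(|lambda_{-1}|/n),
   because |rho x| <= lambda_1 |x|^3 on [-l, l].  Conversely, on one side of
   the cutoff G is rho plus a quadratic carrying half of the coefficient mass S
   of lambda_{-1}; such a quadratic has size a^2 S on a small window near a/4,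
   a/2 or 3a/4, and the positive density at 0 gives these windows probability
   bounded below, so E[G^2] >= c S^2 - C (lambda_1 l^3)^2.  Solving the
   resulting quadratic inequality gives S = O(lambda_1 l^3 + 1/n).  The second
   claim is algebra: only the term lambda_1^2 / (4 n B^2) of the loss depends
   on B. *)

Section RealBounds.
Variable R : realType.

Lemma norm_le_mulXS_of_derive1 (f : R -> R) (K l : R) (k : nat) : 0 <= K ->
  (forall x, derivable f x 1) -> f 0 = 0 ->
  (forall x, `|x| <= l -> `|derive1 f x| <= K * `|x| ^+ k) ->
  forall x, `|x| <= l -> `|f x| <= K * `|x| ^+ k.+1.
Proof.
move=> K0 df f0 hb x hx.
have cont a b : {within `[a, b], continuous f}.
  by apply: derivable_within_continuous => y _; exact: df.
have isd y : is_derive y (1 : R) f (derive1 f y).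
  by rewrite derive1E; apply: derivableP; exact: df.
have mvt_step c : `|c| <= `|x| -> `|f x| = `|derive1 f c| * `|x| ->
    `|f x| <= K * `|x| ^+ k.+1.
  move=> hc ->; rewrite exprS mulrCA [X in _ <= X]mulrC; apply: ler_wpM2r => //.
  apply: le_trans (hb c (le_trans hc hx)) _.
  by apply: ler_wpM2l => //; apply: lerXn2r; rewrite ?nnegrE.
case: (ltgtP x 0) => [xlt|xgt|->]; last by rewrite f0 !normr0 expr0n /= mulr0.
- have [c] := MVT xlt (fun y _ => isd y) (cont x 0).
  rewrite in_itv /= => /andP[hc1 hc2] eq; apply: (mvt_step c).
    by rewrite !ltr0_norm //; lra.
  by rewrite -[LHS]normrN -sub0r -{1}f0 eq normrM sub0r normrN.
- have [c] := MVT xgt (fun y _ => isd y) (cont 0 x).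
  rewrite in_itv /= => /andP[hc1 hc2] eq; apply: (mvt_step c).
    by rewrite !gtr0_norm //; lra.
  by rewrite -[f x]subr0 -{1}f0 eq normrM subr0.
Qed.

Definition quad (A B C x : R) : R := A + B * x + C * x ^+ 2.

Lemma norm_quad_le (A B C x : R) :
  `|quad A B C x| <= (`|A| + `|B| + `|C|) * (1 + `|x|) ^+ 2.
Proof.
rewrite /quad; apply: le_trans (ler_normD _ _) _.
apply: le_trans (lerD (ler_normD _ _) (lexx _)) _.
rewrite !normrM.
have := normr_ge0 A; have := normr_ge0 B; have := normr_ge0 C; have := normr_ge0 x.
nra.
Qed.

(* Lagrange interpolation at a/4, a/2, 3a/4 recovers the coefficients. *)
Lemma quad_coef_le_three_points (a A B C T : R) : 0 < a <= 1 ->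
  `|quad A B C (a / 4)| <= T -> `|quad A B C (a / 2)| <= T ->
  `|quad A B C (3 * a / 4)| <= T ->
  a ^+ 2 * (`|A| + `|B| + `|C|) <= 71 * T.
Proof.
move=> /andP[a0 a1]; rewrite /quad.
have -> : A + B * (a / 4) + C * (a / 4) ^+ 2 = A + (B * a) / 4 + (C * a ^+ 2) / 16 by field.
have -> : A + B * (a / 2) + C * (a / 2) ^+ 2 = A + (B * a) / 2 + (C * a ^+ 2) / 4 by field.
have -> : A + B * (3 * a / 4) + C * (3 * a / 4) ^+ 2
    = A + 3 * (B * a) / 4 + 9 * (C * a ^+ 2) / 16 by field.
rewrite !ler_norml => /andP[h1 h1'] /andP[h2 h2'] /andP[h3 h3'].
have hA : `|A| <= 7 * T by rewrite ler_norml; apply/andP; split; lra.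
have hB : `|B * a| <= 32 * T by rewrite ler_norml; apply/andP; split; lra.
have hC : `|C * a ^+ 2| <= 32 * T by rewrite ler_norml; apply/andP; split; lra.
rewrite normrM (gtr0_norm a0) in hB.
rewrite normrM (ger0_norm (sqr_ge0 a)) in hC.
have nB := normr_ge0 B; have nC := normr_ge0 C.
have a2 : a ^+ 2 <= a by rewrite expr2 ler_piMl // ltW.
nra.
Qed.

Lemma quad_ge_near (a A B C x0 x : R) : 0 < a <= 1 -> a / 4 <= x0 <= 3 * a / 4 ->
  a ^+ 2 * (`|A| + `|B| + `|C|) / 71 <= `|quad A B C x0| ->
  `|x - x0| <= a ^+ 3 / 1200 ->
  a ^+ 2 * (`|A| + `|B| + `|C|) / 200 <= `|quad A B C x|.
Proof.
move=> /andP[a0 a1] /andP[b1 b2] hq; rewrite ler_norml => /andP[hx1 hx2].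
have a2 : a ^+ 2 <= a by rewrite expr2 ler_piMl // ltW.
have a3 : a ^+ 3 <= a ^+ 2 by rewrite exprS ler_piMl // ?exprn_ge0 // ltW.
have a3p : 0 <= a ^+ 3 by rewrite exprn_ge0 // ltW.
have nA := normr_ge0 A; have nB := normr_ge0 B; have nC := normr_ge0 C.
have hd : `|quad A B C x0 - quad A B C x| <= a ^+ 3 / 1200 * (`|B| + 2 * `|C|).
  have -> : quad A B C x0 - quad A B C x = (x0 - x) * (B + C * (x + x0)).
    by rewrite /quad; ring.
  rewrite normrM; apply: ler_pM => //.
  - by rewrite ler_norml; apply/andP; split; lra.
  - apply: le_trans (ler_normD _ _) _; apply: lerD => //.
    rewrite normrM [`|x + x0|]ger0_norm; last lra.
    by rewrite mulrC; apply: ler_wpM2r => //; lra.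
have : `|quad A B C x0| <= `|quad A B C x0 - quad A B C x| + `|quad A B C x|.
  by rewrite -{1}(subrK (quad A B C x) (quad A B C x0)) ler_normD.
have : a ^+ 3 * (`|B| + 2 * `|C|) <= a ^+ 2 * (2 * (`|A| + `|B| + `|C|)).
  apply: le_trans (_ : a ^+ 2 * (`|B| + 2 * `|C|) <= _).
    by apply: ler_wpM2r => //; lra.
  by apply: ler_wpM2l => //; lra.
nra.
Qed.

Lemma quad_ge_on_interval (a A B C : R) : 0 < a <= 1 ->
  exists2 x0, a / 4 <= x0 <= 3 * a / 4 &
   forall x, `|x - x0| <= a ^+ 3 / 1200 ->
   a ^+ 2 * (`|A| + `|B| + `|C|) / 200 <= `|quad A B C x|.
Proof.
move=> ha; have /andP[a0 a1] := ha.
set T := a ^+ 2 * (`|A| + `|B| + `|C|) / 71.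
have [x0 hx0 hT] : exists2 x0, a / 4 <= x0 <= 3 * a / 4 & T <= `|quad A B C x0|.
  case: (leP T `|quad A B C (a / 4)|) => h1.
    by exists (a / 4) => //; apply/andP; split; lra.
  case: (leP T `|quad A B C (a / 2)|) => h2.
    by exists (a / 2) => //; apply/andP; split; lra.
  case: (leP T `|quad A B C (3 * a / 4)|) => h3.
    by exists (3 * a / 4) => //; apply/andP; split; lra.
  set M := Num.max `|quad A B C (a / 4)|
    (Num.max `|quad A B C (a / 2)| `|quad A B C (3 * a / 4)|).
  have hMT : M < T by rewrite !gt_max h1 h2 h3.
  have := @quad_coef_le_three_points a A B C M ha.
  rewrite !le_max !lexx !orbT => /(_ isT isT isT).
  rewrite /T in hMT; lra.
by exists x0 => // x; apply: quad_ge_near.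
Qed.

Lemma le_of_sqr_le_quadratic (S r al q : R) : 0 <= S -> 0 <= r -> 0 <= al -> 0 <= q ->
  S ^+ 2 <= al * r ^+ 2 + q * S -> S <= (1 + al) * r + q.
Proof.
move=> S0 r0 al0 q0 h; rewrite leNgt; apply/negP => hlt.
have h1 : ((1 + al) * r + q) * S < S * S.
  by rewrite ltr_pM2r //; apply: le_lt_trans hlt; rewrite addr_ge0 ?mulr_ge0 ?addr_ge0.
have h2 : (1 + al) * r * ((1 + al) * r) <= (1 + al) * r * S.
  by apply: ler_wpM2l; [rewrite mulr_ge0 ?addr_ge0 | lra].
have h3 : 0 <= r ^+ 2 * (1 + al + al ^+ 2).
  by rewrite mulr_ge0 ?exprn_ge0 ?addr_ge0 ?exprn_ge0.
rewrite expr2 in h h3; nra.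
Qed.

Lemma le_of_sqr_bounds (c k S r s e : R) :
  0 < c -> 0 <= k -> 0 <= S -> 0 <= r -> 0 <= s -> 0 <= e ->
  c * S ^+ 2 - k * r ^+ 2 <= r ^+ 2 + s * e * S ->
  S <= (1 + (1 + k) / c + s / c) * (r + e).
Proof.
move=> c0 k0 S0 r0 s0 e0 h.
have al0 : 0 <= (1 + k) / c by rewrite divr_ge0 ?addr_ge0 // ltW.
have be0 : 0 <= s / c by rewrite divr_ge0 // ltW.
have hq : S ^+ 2 <= (1 + k) / c * r ^+ 2 + s / c * e * S.
  have -> : (1 + k) / c * r ^+ 2 + s / c * e * S = ((1 + k) * r ^+ 2 + s * e * S) / c.
    by field; rewrite gt_eqF.
  rewrite ler_pdivlMr //; lra.
apply: le_trans (le_of_sqr_le_quadratic S0 r0 al0 (mulr_ge0 be0 e0) hq) _.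
have := mulr_ge0 al0 e0; have := mulr_ge0 be0 r0; nra.
Qed.

End RealBounds.

Section DualParam.
Variables (R : realType) (l : R).
Implicit Types (t : dual_param R) (x : R).

Definition norm1_lam_rest t : R :=
  `|lam2 t| + `|lam3 t| + `|lam4 t| + `|lam5 t| + `|lam6 t|.

Lemma norm1_lam_rest_ge0 t : 0 <= norm1_lam_rest t.
Proof. by rewrite /norm1_lam_rest !addr_ge0. Qed.

Lemma norm_lam_rest_le_norm1 t : norm_lam_rest t <= norm1_lam_rest t.
Proof.
rewrite /norm_lam_rest -(ger0_norm (norm1_lam_rest_ge0 t)) -sqrtr_sqr.
rewrite ler_sqrt ?exprn_ge0 ?norm1_lam_rest_ge0 // /norm1_lam_rest.
rewrite -[lam2 t ^+ 2]real_normK ?num_real // -[lam3 t ^+ 2]real_normK ?num_real //.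
rewrite -[lam4 t ^+ 2]real_normK ?num_real // -[lam5 t ^+ 2]real_normK ?num_real //.
rewrite -[lam6 t ^+ 2]real_normK ?num_real //.
have := normr_ge0 (lam2 t); have := normr_ge0 (lam3 t); have := normr_ge0 (lam4 t).
have := normr_ge0 (lam5 t); have := normr_ge0 (lam6 t).
nra.
Qed.

Lemma in_Theta_rho_cubic t : in_Theta l t ->
  forall x, `|x| <= l -> `|rho t x| <= lam1 t * `|x| ^+ 3.
Proof.
move=> [lam0 [drho [ddrho [rho0 [drho0 [ddrho0 lip]]]]]].
have hl x : `|x| <= l -> `|derive1 (derive1 (rho t)) x| <= lam1 t * `|x| ^+ 1.
  move=> hx; have l0 : 0 <= l := le_trans (normr_ge0 _) hx.
  have := lip x 0; rewrite ddrho0 !subr0 expr1; apply.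
  - by rewrite in_itv /= -ler_norml.
  - by rewrite in_itv /= oppr_le0 l0.
apply: (norm_le_mulXS_of_derive1 lam0 drho rho0); exact: (norm_le_mulXS_of_derive1 lam0 ddrho drho0 hl).
Qed.

Lemma in_Theta_rho_le t x : in_Theta l t -> `|x| <= l -> `|rho t x| <= lam1 t * l ^+ 3.
Proof.
move=> ht hx; apply: le_trans (in_Theta_rho_cubic ht hx) _.
apply: ler_wpM2l; first by case: ht.
by apply: lerXn2r; rewrite ?nnegrE // (le_trans (normr_ge0 _) hx).
Qed.

Lemma in_Theta_rho_continuous t : in_Theta l t -> continuous (rho t).
Proof.
by move=> [_ [drho _]] x; apply/differentiable_continuous/derivable1_diffP.
Qed.

Lemma Gfun_treat_ge0 t x : 0 <= x ->
  Gfun t x (treat x) = rho t x + quad (lam2 t) (lam4 t) (lam6 t) x.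
Proof. by move=> x0; rewrite /Gfun /treat x0 /quad /=; ring. Qed.

Lemma Gfun_treat_lt0 t x : x < 0 ->
  Gfun t x (treat x) = rho t x + quad (lam3 t) (- lam5 t) (lam6 t) (- x).
Proof. by move=> x0; rewrite /Gfun /treat leNgt x0 /quad /=; ring. Qed.

Lemma norm_Gfun_le t x : in_Theta l t -> `|x| <= l ->
  `|Gfun t x (treat x)| <= lam1 t * l ^+ 3 + norm1_lam_rest t * (1 + l) ^+ 2.
Proof.
move=> ht hx; have l0 : 0 <= l := le_trans (normr_ge0 _) hx.
have hx2 : (1 + `|x|) ^+ 2 <= (1 + l) ^+ 2.
  by apply: lerXn2r; rewrite ?nnegrE ?addr_ge0 // lerD2l.
have hl2 : 0 <= (1 + `|x|) ^+ 2 by rewrite exprn_ge0 // addr_ge0.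
have := normr_ge0 (lam2 t); have := normr_ge0 (lam3 t); have := normr_ge0 (lam4 t).
have := normr_ge0 (lam5 t); have := normr_ge0 (lam6 t).
rewrite /norm1_lam_rest => h6 h5 h4 h3 h2.
have hrho := in_Theta_rho_le ht hx.
case: (leP 0 x) => hx0.
- rewrite Gfun_treat_ge0 //; apply: le_trans (ler_normD _ _) _.
  have := norm_quad_le (lam2 t) (lam4 t) (lam6 t) x; nra.
- rewrite Gfun_treat_lt0 //; apply: le_trans (ler_normD _ _) _.
  have := norm_quad_le (lam3 t) (- lam5 t) (lam6 t) (- x); rewrite !normrN; nra.
Qed.

Lemma measurable_Gfun_sqr t : in_Theta l t ->
  measurable_fun setT (fun x => Gfun t x (treat x) ^+ 2).
Proof.
move=> ht; apply: measurable_funX; rewrite /Gfun.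
have mT : measurable_fun setT (@treat R).
  by apply: measurable_fun_ifT => //; apply: measurable_fun_ler.
have m1T : measurable_fun setT (fun x => 1 - treat x) by exact: measurable_funB.
repeat apply: measurable_funD; repeat apply: measurable_funM => //.
by apply: continuous_measurable_fun; exact: in_Theta_rho_continuous ht.
Qed.

End DualParam.

Section BoundedIntegral.
Variables (R : realType) (P : probability R R).

Lemma fin_num_prob (A : set R) : measurable A -> P A \is a fin_num.
Proof.
move=> mA; rewrite ge0_fin_numE //.
exact: le_lt_trans (probability_le1 P mA) (ltry _).
Qed.

Lemma fine_prob_le1 (A : set R) : measurable A -> fine (P A) <= 1.
Proof. by move=> mA; rewrite -lee_fin fineK ?fin_num_prob // probability_le1. Qed.

Variables (A : set R) (f : R -> R) (M : R).
Hypotheses (mA : measurable A) (mf : measurable_fun setT f)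
  (f_bnd : forall x, A x -> 0 <= f x <= M).

Let mfA : measurable_fun A (fun x => (f x)%:E).
Proof. by apply/measurable_EFinP; exact: measurable_funTS. Qed.

Let f_ge0 x : A x -> (0 <= (f x)%:E)%E.
Proof. by move=> /f_bnd /andP[]. Qed.

Lemma integral_bounded_le :
  (\int[P]_(x in A) (f x)%:E <= (M * fine (P A))%:E)%E.
Proof.
apply: (@le_trans _ _ (\int[P]_(x in A) (cst M%:E) x)%E).
  by apply: ge0_le_integral => // x /f_bnd /andP[].
by rewrite integral_cst // EFinM fineK // fin_num_prob.
Qed.

Lemma integral_bounded_fin_num : (\int[P]_(x in A) (f x)%:E)%E \is a fin_num.
Proof.
rewrite ge0_fin_numE; last exact: integral_ge0.
exact: le_lt_trans integral_bounded_le (ltry _).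
Qed.

Lemma fine_integral_bounded_ge0 : 0 <= fine (\int[P]_(x in A) (f x)%:E)%E.
Proof. exact/fine_ge0/integral_ge0. Qed.

Lemma fine_integral_bounded_ge (J : set R) (K : R) :
  measurable J -> J `<=` A -> 0 <= K -> (forall x, J x -> K <= f x) ->
  K * fine (P J) <= fine (\int[P]_(x in A) (f x)%:E)%E.
Proof.
move=> mJ JA K0 hK.
have -> : K * fine (P J) = fine (K%:E * P J) by rewrite fineM // fin_num_prob.
apply: fine_le.
- by rewrite fin_numM // fin_num_prob.
- exact: integral_bounded_fin_num.
rewrite -integral_cst //.
apply: (@le_trans _ _ (\int[P]_(x in J) (f x)%:E)%E).
  by apply: ge0_le_integral => //; exact: measurable_funS mfA.
by apply: ge0_subset_integral => // x /JA /f_ge0.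
Qed.

Lemma cond_mean_bounded_le : 0 <= M ->
  fine (\int[P]_(x in A) (f x)%:E)%E / fine (P A) <= M.
Proof.
move=> M0; have PA0 : 0 <= fine (P A) by exact: fine_ge0.
have /= hint := fine_le integral_bounded_fin_num
  (isT : (M * fine (P A))%:E \is a fin_num) integral_bounded_le.
case: (ltgtP (fine (P A)) 0) => [|PAp|->]; first by rewrite ltNge PA0.
- by rewrite ler_pdivrMr.
- by rewrite invr0 mulr0.
Qed.

Lemma cond_mean_bounded_ge (J : set R) (K : R) :
  measurable J -> J `<=` A -> 0 <= K -> (forall x, J x -> K <= f x) ->
  K * fine (P J) <= fine (\int[P]_(x in A) (f x)%:E)%E / fine (P A).
Proof.
move=> mJ JA K0 hK; have PA1 := fine_prob_le1 mA.
have hint := fine_integral_bounded_ge mJ JA K0 hK.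
case: (ltgtP (fine (P A)) 0) => [|PAp|PA0].
- by rewrite ltNge fine_ge0.
- by apply: le_trans hint _; rewrite ler_pdivlMr // ler_piMr // fine_integral_bounded_ge0.
have PJ0 : fine (P J) = 0.
  have : fine (P J) <= fine (P A).
    by apply: fine_le; rewrite ?fin_num_prob // le_measure ?inE.
  by rewrite PA0 => PJ0; apply/le_anti; rewrite PJ0 fine_ge0.
by rewrite PJ0 PA0 mulr0 invr0 mulr0.
Qed.

End BoundedIntegral.

Section SecondMoment.
Variables (R : realType) (l : R) (P : probability R R).
Implicit Types (t : dual_param R).

Lemma measurable_retained : measurable (retained l).
Proof.
have -> : retained l = [set` `[-l, l]].
  by apply/seteqP; split => x; rewrite /retained /= in_itv /= ler_norml.
exact: measurable_itv.
Qed.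

Let Gfun_sqr_bounded t : in_Theta l t -> forall x, retained l x ->
  0 <= Gfun t x (treat x) ^+ 2 <= (lam1 t * l ^+ 3 + norm1_lam_rest t * (1 + l) ^+ 2) ^+ 2.
Proof.
move=> ht x hx; rewrite sqr_ge0 -real_normK ?num_real //.
have l0 : 0 <= l := le_trans (normr_ge0 _) hx.
apply: lerXn2r; rewrite ?nnegrE ?norm_Gfun_le //.
by rewrite addr_ge0 ?mulr_ge0 ?exprn_ge0 ?addr_ge0 ?norm1_lam_rest_ge0 //; case: ht.
Qed.

Lemma EG2_le t M : in_Theta l t -> 0 <= M ->
  (forall x, retained l x -> Gfun t x (treat x) ^+ 2 <= M) -> EG2 l P t <= M.
Proof.
move=> ht M0 hM.
apply: (@cond_mean_bounded_le _ P _ (fun x => Gfun t x (treat x) ^+ 2) M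
  measurable_retained (measurable_Gfun_sqr ht)) => // x hx.
by rewrite sqr_ge0 hM.
Qed.

Lemma EG2_ge t (J : set R) (K : R) : in_Theta l t ->
  measurable J -> J `<=` retained l -> 0 <= K ->
  (forall x, J x -> K <= Gfun t x (treat x) ^+ 2) -> K * fine (P J) <= EG2 l P t.
Proof.
move=> ht.
exact: (@cond_mean_bounded_ge _ P _ (fun x => Gfun t x (treat x) ^+ 2) _
  measurable_retained (measurable_Gfun_sqr ht) (Gfun_sqr_bounded ht)).
Qed.

Lemma EG2_ge0 t : in_Theta l t -> 0 <= EG2 l P t.
Proof.
move=> ht; have := @EG2_ge t set0 0 ht measurable0 (sub0set _) (lexx 0).
by rewrite mul0r; apply => x.
Qed.

Lemma minimizer_EG2_le n s2 B t : 0 < s2 -> (0 < n)%N -> is_minimizer l P n s2 B t ->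
  EG2 l P t <= (lam1 t * l ^+ 3) ^+ 2 + 4 * s2 * n%:R^-1 * norm1_lam_rest t.
Proof.
move=> s20 n0 [ht hmin].
pose t0 := DualParam (rho t) (lam1 t) 0 0 0 0 0.
have ht0 : in_Theta l t0 := ht.
have hEG0 : EG2 l P t0 <= (lam1 t * l ^+ 3) ^+ 2.
  apply: EG2_le => // [|x hx]; first exact: sqr_ge0.
  have -> : Gfun t0 x (treat x) = rho t x by rewrite /Gfun /=; ring.
  rewrite -real_normK ?num_real //; apply: lerXn2r; rewrite ?nnegrE ?in_Theta_rho_le //.
  by rewrite mulr_ge0 ?exprn_ge0 //; case: ht0 => // _ _; exact: le_trans (normr_ge0 _) hx.
have hS : lam3 t - lam2 t <= norm1_lam_rest t.
  have := ler_norm (lam3 t); have := ler_norm (- lam2 t).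
  have := normr_ge0 (lam4 t); have := normr_ge0 (lam5 t); have := normr_ge0 (lam6 t).
  rewrite normrN /norm1_lam_rest; lra.
have := hmin t0 ht0; rewrite /dual_loss /= subrr mul0r addr0.
rewrite -/(EG2 l P t) -/(EG2 l P t0) => hle.
have s40 : 0 < 4 * s2 by rewrite mulr_gt0.
have ni0 : 0 <= n%:R^-1 :> R by rewrite invr_ge0.
have hdiff : (EG2 l P t - EG2 l P t0) / (4 * s2) <= (lam3 t - lam2 t) * n%:R^-1.
  by move: hle; rewrite !mulrBl; lra.
have : EG2 l P t - EG2 l P t0 <= 4 * s2 * ((lam3 t - lam2 t) * n%:R^-1).
  by move: hdiff; rewrite ler_pdivrMr // mulrC.
have : (lam3 t - lam2 t) * n%:R^-1 <= norm1_lam_rest t * n%:R^-1 by exact: ler_wpM2r.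
nra.
Qed.

End SecondMoment.

Lemma rv_law_itv_mass_ge (R : realType) (P : probability R R) (p : R -> R) :
  rv_law P p -> exists2 d : R, 0 < d &
  forall u v : R, -d <= u -> u < v -> v <= d -> p 0 / 2 * (v - u) <= fine (P [set` `[u, v]]).
Proof.
move=> [mp [p0 [hP [cp pos]]]].
have e0 : 0 < p 0 / 2 by rewrite divr_gt0.
have near_p0 := @cvgr_dist_lt _ _ _ (nbhs (0 : R)) _ p (p 0) cp _ e0.
have [d /= d0 hd] := proj1 (nbhs_ballP _ _) (near_p0 _).
exists (d / 2) => [|u v hu uv hv]; first by rewrite divr_gt0.
have hle x : x \in `[u, v] -> p 0 / 2 <= p x.
  rewrite in_itv /= => /andP[h1 h2].
  have : ball 0 d x by rewrite -ball_normE /= sub0r normrN ltr_norml; apply/andP; split; lra.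
  by move=> /hd; rewrite ltr_norml => /andP[_ h3]; lra.
rewrite -lee_fin fineK ?fin_num_prob ?measurable_itv // hP ?measurable_itv //.
apply: (@le_trans _ _ (\int[lebesgue_measure]_(x in [set` `[u, v]]) (cst (p 0 / 2)%:E) x)%E).
  have leb_uv : lebesgue_measure [set` `[u, v]] = (v - u)%:E.
    by rewrite lebesgue_measure_itv /= lte_fin uv EFinB.
  by rewrite integral_cst ?measurable_itv // [X in (_ <= _ * X)%E]leb_uv EFinM.
apply: ge0_le_integral => //.
- by move=> x _ /=; rewrite lee_fin ltW.
- by apply/measurable_EFinP; exact: measurable_funTS.
Qed.

Section SecondMomentLowerBound.
Variables (R : realType) (l d m : R) (P : probability R R).
Hypotheses (l_gt0 : 0 < l) (d_gt0 : 0 < d) (m_gt0 : 0 < m).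
Hypothesis P_itv_ge : forall u v : R, -d <= u -> u < v -> v <= d ->
  m * (v - u) <= fine (P [set` `[u, v]]).
Implicit Types (t : dual_param R).

(* a <= min(l, d) keeps the windows of half-width w inside the retained region
   and where the density bound holds; w is small enough for quad_ge_near. *)
Let a := Num.min l (Num.min d 1).
Let w := a ^+ 3 / 1200.

Let a_gt0 : 0 < a. Proof. by rewrite !lt_min l_gt0 d_gt0 ltr01. Qed.
Let a_le1 : a <= 1. Proof. by rewrite !ge_min lexx !orbT. Qed.
Let a_le_l : a <= l. Proof. by rewrite ge_min lexx. Qed.
Let a_le_d : a <= d. Proof. by rewrite !ge_min lexx orbT. Qed.
Let w_gt0 : 0 < w. Proof. by have := exprn_gt0 3 a_gt0; rewrite /w; lra. Qed.
Let w_le : w <= a / 1200.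
Proof. by have := @ler_iXnr _ a 3 isT (ltW a_gt0) a_le1; rewrite /w; lra. Qed.

(* s = 1 is the treated side x > 0, s = -1 the control side x < 0. *)
Lemma EG2_ge_side t (s A B C : R) : in_Theta l t -> s ^+ 2 = 1 ->
  (forall x, 0 < s * x -> Gfun t x (treat x) = rho t x + quad A B C (s * x)) ->
  2 * m * w * ((a ^+ 2 * (`|A| + `|B| + `|C|) / 200) ^+ 2 / 2 - (lam1 t * l ^+ 3) ^+ 2)
    <= EG2 l P t.
Proof.
move=> ht s2 hG; have a0 := a_gt0; have wa := w_le; have w0 := w_gt0.
set k := a ^+ 2 * _ / 200; set r := lam1 t * l ^+ 3.
have s_norm : `|s| = 1.
  by rewrite -[`|s|]normr_id -sqrtr_sqr real_normK ?num_real // s2 sqrtr1.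
have [x0 /andP[x0_ge x0_le] hq] := @quad_ge_on_interval R a A B C (introT andP (conj a_gt0 a_le1)).
set J := [set` `[s * x0 - w, s * x0 + w]].
have in_J x : J x -> `|s * x - x0| <= w.
  rewrite /J /= in_itv /= => /andP[h1 h2].
  have -> : s * x - x0 = s * (x - s * x0) by rewrite mulrBr mulrA -expr2 s2 mul1r.
  by rewrite normrM s_norm mul1r ler_norml; apply/andP; split; lra.
have J_window x : J x -> 0 < s * x /\ `|x| <= a.
  move=> /in_J; rewrite ler_norml => /andP[h1 h2]; split; first lra.
  by rewrite -[`|x|]mul1r -s_norm -normrM ler_norml; apply/andP; split; lra.
have J_retained : J `<=` retained l.
  by move=> x /J_window [_ hx]; rewrite /retained /=; exact: le_trans hx a_le_l.
have PJ : 2 * m * w <= fine (P J).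
  have -> : 2 * m * w = m * (s * x0 + w - (s * x0 - w)) by ring.
  have : `|s * x0| <= 3 * a / 4 by rewrite normrM s_norm mul1r ger0_norm //; lra.
  have := a_le_d; rewrite ler_norml => ad /andP[h1 h2].
  by apply: P_itv_ge; lra.
have k0 : 0 <= k.
  by apply: divr_ge0; [apply: mulr_ge0; [exact: sqr_ge0 | rewrite !addr_ge0] | lra].
have mw : 0 < m * w := mulr_gt0 m_gt0 w0.
have [hK|hK] := leP (k ^+ 2 / 2 - r ^+ 2) 0.
  by apply: le_trans _ (EG2_ge0 P ht); apply: mulr_ge0_le0 => //; lra.
apply: le_trans _ (EG2_ge P ht (measurable_itv _) J_retained (ltW hK) _).
  by rewrite [X in X <= _]mulrC; apply: ler_wpM2l => //; exact: ltW.
move=> x Jx; have [sx_gt0 xa] := J_window x Jx.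
have hr : `|rho t x| <= r by apply: in_Theta_rho_le ht _; exact: le_trans xa a_le_l.
have hk : k <= `|quad A B C (s * x)| by apply: hq; exact: in_J.
rewrite hG //; set q := quad A B C (s * x).
have q2 : k ^+ 2 <= q ^+ 2.
  by rewrite -[q ^+ 2]real_normK ?num_real //; apply: lerXn2r; rewrite ?nnegrE.
have r2 : rho t x ^+ 2 <= r ^+ 2.
  rewrite -[rho t x ^+ 2]real_normK ?num_real //; apply: lerXn2r; rewrite ?nnegrE //.
  exact: le_trans (normr_ge0 _) hr.
(* (rho + q)^2 >= q^2 / 2 - rho^2 *)
have := sqr_ge0 (2 * rho t x + q); nra.
Qed.

Lemma EG2_ge_sqr_norm1 : exists c k : R, [/\ 0 < c, 0 <= k &
  forall t, in_Theta l t ->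
    c * norm1_lam_rest t ^+ 2 - k * (lam1 t * l ^+ 3) ^+ 2 <= EG2 l P t].
Proof.
have a0 := a_gt0; have mw : 0 < m * w := mulr_gt0 m_gt0 w_gt0.
have a2 : 0 < a ^+ 2 / 400 by apply: divr_gt0; [exact: exprn_gt0 | lra].
exists (m * w * (a ^+ 2 / 400) ^+ 2), (2 * m * w); split.
- exact: mulr_gt0 mw (exprn_gt0 2 a2).
- lra.
move=> t ht; set S := norm1_lam_rest t; set r := lam1 t * l ^+ 3.
have from_side (S' : R) : S <= 2 * S' ->
    2 * m * w * ((a ^+ 2 * S' / 200) ^+ 2 / 2 - r ^+ 2) <= EG2 l P t ->
    m * w * (a ^+ 2 / 400) ^+ 2 * S ^+ 2 - 2 * m * w * r ^+ 2 <= EG2 l P t.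
  move=> hS hside; have S0 : 0 <= S := norm1_lam_rest_ge0 t.
  have hY : a ^+ 2 / 400 * S <= a ^+ 2 * S' / 200.
    by have := ler_wpM2l (ltW (exprn_gt0 2 a0)) hS; lra.
  have hY2 : (a ^+ 2 / 400 * S) ^+ 2 <= (a ^+ 2 * S' / 200) ^+ 2.
    have Y0 := mulr_ge0 (ltW a2) S0.
    by apply: lerXn2r; rewrite ?nnegrE //; exact: le_trans Y0 hY.
  rewrite exprMn in hY2; nra.
have := normr_ge0 (lam2 t); have := normr_ge0 (lam3 t); have := normr_ge0 (lam4 t).
have := normr_ge0 (lam5 t); have := normr_ge0 (lam6 t) => n6 n5 n4 n3 n2.
have [hside|hside] := leP (`|lam3 t| + `|lam5 t| + `|lam6 t|) (`|lam2 t| + `|lam4 t| + `|lam6 t|).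
- apply: (from_side (`|lam2 t| + `|lam4 t| + `|lam6 t|)); first by rewrite /S /norm1_lam_rest; lra.
  apply: (EG2_ge_side ht (s := 1)); first by rewrite expr1n.
  by move=> x; rewrite mul1r => /ltW; exact: Gfun_treat_ge0.
- apply: (from_side (`|lam3 t| + `|- lam5 t| + `|lam6 t|)).
    by rewrite normrN /S /norm1_lam_rest; lra.
  apply: (EG2_ge_side ht (s := -1)); first by rewrite sqrrN expr1n.
  by move=> x; rewrite mulN1r oppr_gt0; exact: Gfun_treat_lt0.
Qed.
End SecondMomentLowerBound.

Lemma minimizer_norm_lam_rest_le (R : realType) (l : R) (P : probability R R)
    (p : R -> R) (s2 B : R) : 0 < l -> rv_law P p -> 0 < s2 ->
  exists C : R, forall (n : nat) (t : dual_param R), (0 < n)%N ->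
    is_minimizer l P n s2 B t -> norm_lam_rest t <= C * (lam1 t * l ^+ 3 + n%:R^-1).
Proof.
move=> l0 law s20; have [d d0 Pge] := rv_law_itv_mass_ge law.
have p0 : 0 < p 0 / 2 by case: law => _ [_ [_ [_ p0]]]; apply: divr_gt0 p0 _; lra.
have [c [k [c0 k0 EG2_ge]]] := EG2_ge_sqr_norm1 l0 d0 p0 Pge.
exists (1 + (1 + k) / c + 4 * s2 / c) => n t n0 hmin.
apply: le_trans (norm_lam_rest_le_norm1 t) _.
have l1 : 0 <= lam1 t by case: hmin => [[]].
apply: le_of_sqr_bounds; rewrite ?norm1_lam_rest_ge0 ?invr_ge0 ?ler0n ?mulr_ge0 ?exprn_ge0 ?(ltW l0) //.
- lra.
- exact: le_trans (EG2_ge t (proj1 hmin)) (minimizer_EG2_le s20 n0 hmin).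
Qed.

Lemma dual_loss_subB (R : realType) (l : R) (P : probability R R) (n : nat)
    (t : dual_param R) (s2 B B' : R) : (0 < n)%N -> 0 < B -> 0 < B' ->
  dual_loss l P n t s2 B' - dual_loss l P n t s2 B
    = lam1 t ^+ 2 / (4 * n%:R) * ((B'^-1 - B^-1) * (B'^-1 + B^-1)).
Proof.
move=> n0 B0 B'0; rewrite /dual_loss.
move: (EG2 l P t / (4 * s2)) ((lam2 t - lam3 t) / n%:R) => E c; field.
by rewrite !gt_eqF ?ltr0n.
Qed.

Lemma dual_loss_subB_le (R : realType) (l : R) (P : probability R R) (n : nat)
    (t tstar : dual_param R) (s2 delta B Bh eps0 : R) :
  (0 < n)%N -> 0 < B -> 0 < eps0 -> eps0 <= Bh -> 0 <= lam1 tstar ->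
  `|lam1 t - lam1 tstar| <= delta * lam1 tstar ->
  `|dual_loss l P n t s2 Bh - dual_loss l P n t s2 B|
    <= (1 + delta) ^+ 2 * (eps0^-1 + B^-1) / 4 * (lam1 tstar ^+ 2 / n%:R) * `|Bh^-1 - B^-1|.
Proof.
move=> n0 B0 e0 eBh ls0 hl.
have Bh0 : 0 < Bh := lt_le_trans e0 eBh.
have nR : 0 < n%:R :> R by rewrite ltr0n.
have Bi : 0 < B^-1 by rewrite invr_gt0.
have Bhi : Bh^-1 <= eps0^-1 by rewrite lef_pV2 ?posrE.
have hl1 : `|lam1 t| <= (1 + delta) * lam1 tstar.
  have : `|lam1 t| <= `|lam1 t - lam1 tstar| + `|lam1 tstar|.
    by rewrite -{1}(subrK (lam1 tstar) (lam1 t)) ler_normD.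
  rewrite (ger0_norm ls0); lra.
have hl2 : lam1 t ^+ 2 <= ((1 + delta) * lam1 tstar) ^+ 2.
  rewrite -real_normK ?num_real //; apply: lerXn2r; rewrite ?nnegrE //.
  exact: le_trans (normr_ge0 _) hl1.
have a0 : 0 <= lam1 t ^+ 2 / (4 * n%:R).
  by apply: divr_ge0; [exact: sqr_ge0 | apply: mulr_ge0; [lra | exact: ltW]].
have v0 : 0 <= Bh^-1 + B^-1 by rewrite addr_ge0 ?invr_ge0 ?(ltW Bi) // ltW.
rewrite dual_loss_subB // normrM (ger0_norm a0) normrM (ger0_norm v0).
set u := `|Bh^-1 - B^-1|; have u0 : 0 <= u := normr_ge0 _.
have ni0 : 0 < n%:R^-1 :> R by rewrite invr_gt0.
have -> : lam1 t ^+ 2 / (4 * n%:R) * (u * (Bh^-1 + B^-1))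
    = (lam1 t ^+ 2 * (Bh^-1 + B^-1)) * (n%:R^-1 * u / 4).
  by rewrite invfM; ring.
have -> : (1 + delta) ^+ 2 * (eps0^-1 + B^-1) / 4 * (lam1 tstar ^+ 2 / n%:R) * u
    = (((1 + delta) * lam1 tstar) ^+ 2 * (eps0^-1 + B^-1)) * (n%:R^-1 * u / 4).
  by ring.
apply: ler_wpM2r; first by apply: divr_ge0; [exact: mulr_ge0 (ltW ni0) u0 | lra].
apply: ler_pM => //; [exact: sqr_ge0 | lra].
Qed.

Theorem lemma5 (R : realType) :
  (forall (l : R) (P : probability R R) (p : R -> R),
     0 < l -> rv_law P p ->
     forall s2 B : R, 0 < s2 -> 0 < B ->
     forall tstar : nat -> dual_param R,
       (forall n : nat, (0 < n)%N -> is_minimizer l P n s2 B (tstar n)) ->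
       exists C : R, exists N : nat, forall n : nat, (N <= n)%N ->
         norm_lam_rest (tstar n)
           <= C * (lam1 (tstar n) * l ^+ 3 + n%:R^-1))
  /\
  (forall delta B eps0 : R, 0 < delta < 1 -> 0 < B -> 0 < eps0 ->
     exists C : R,
       forall (eps l : R) (P : probability R R) (p : R -> R),
         0 < eps < 1 -> 0 < l -> rv_law P p ->
         forall s2h Bh : R, 0 < s2h -> eps0 <= Bh ->
         forall n : nat, (0 < n)%N ->
         forall tstar : dual_param R, is_minimizer l P n s2h B tstar ->
         forall t : dual_param R, in_nbhd l delta eps tstar t ->
           `|dual_loss l P n t s2h Bh - dual_loss l P n t s2h B|
             <= C * (lam1 tstar ^+ 2 / n%:R) * `|Bh^-1 - B^-1|).
Proof.
split.
- move=> l P p l0 law s2 B s20 _ tstar hmin.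
  have [C hC] := minimizer_norm_lam_rest_le B l0 law s20.
  by exists C, 1%N => n n0; apply: hC (hmin n n0).
- move=> delta B eps0 _ B0 e0.
  exists ((1 + delta) ^+ 2 * (eps0^-1 + B^-1) / 4).
  move=> eps l P p _ _ _ s2h Bh _ eBh n n0 tstar [[ls0 _] _] t [_ [hl _]].
  exact: dual_loss_subB_le.
Qed.
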